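(* If $xy\in E(C)$ and $P$ is an external $x,y$-path, then $P$ has an even number of edges.
   Context: All graphs are simple. $\mathcal{G}^*$ denotes the class of graphs in which any two distinct odd cycles share at most one edge. Standing setting: $G\in\mathcal{G}^*$ is $2$-connected, and $C$ is a longest odd cycle of $G$ with $|C|\ge 5$. We also write $C$ for its vertex set. For $x,y\in C$, an external $x,y$-path is an $x,y$-path meeting $C$ only at its endpoints. *)

From mathcomp Require Import all_boot.
Set Implicit Arguments. Unset Strict Implicit. Unset Printing Implicit Defensive.

Definition simple_graph (T : finType) (e : rel T) : Prop :=
  symmetric e /\ irreflexive e.

(* A cycle is a duplicate-free cyclic sequence of at least 3 vertices,
   consecutive vertices (cyclically) adjacent. Its length is size s. *)
Definition is_cycle (T : finType) (e : rel T) (s : seq T) : Prop :=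
  [/\ uniq s, 3 <= size s & cycle e s].

Definition is_odd_cycle (T : finType) (e : rel T) (s : seq T) : Prop :=
  is_cycle e s /\ odd (size s).

Definition cedges (T : finType) (s : seq T) : {set {set T}} :=
  [set [set x; next s x] | x in s].

(* The class G*: any two distinct odd cycles (distinct as subgraphs, i.e.
   different edge sets) share at most one edge. *)
Definition in_Gstar (T : finType) (e : rel T) : Prop :=
  forall s1 s2 : seq T, is_odd_cycle e s1 -> is_odd_cycle e s2 ->
    cedges s1 != cedges s2 -> #|cedges s1 :&: cedges s2| <= 1.

Definition two_connected (T : finType) (e : rel T) : Prop :=
  [/\ 3 <= #|T|,
      (forall a b : T, connect e a b) &
      (forall v a b : T, a != v -> b != v ->
         connect [rel u w | [&& e u w, u != v & w != v]] a b)].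

Definition longest_odd_cycle (T : finType) (e : rel T) (C : seq T) : Prop :=
  is_odd_cycle e C /\ forall D, is_odd_cycle e D -> size D <= size C.

(* An x,y-path x :: p (ending at y, last x p = y, |p| edges), simple,
   meeting C only at its endpoints. *)
Definition external_path (T : finType) (e : rel T) (C : seq T)
    (x y : T) (p : seq T) : Prop :=
  [/\ x \in C, y \in C, path e x p & uniq (x :: p)] /\
  [/\ last x p = y, 0 < size p &
      forall z, z \in p -> z != y -> z \notin C].

From mathcomp Require Import all_boot zify.

Set Implicit Arguments.
Unset Strict Implicit.
Unset Printing Implicit Defensive.

(* If the external path P had an odd number of edges, replacing the edge xy of
   C by P would give a cycle of odd length |C| - 1 + |P|.  As P is not the
   edge xy itself, |P| >= 3, so this odd cycle would be longer than C. *)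

Lemma uniq_path_ends_neq (T : eqType) (x : T) (p : seq T) :
  uniq (x :: p) -> 0 < size p -> x != last x p.
Proof.
case: p => [|a s] //= /andP [xNas _] _.
by apply: contraNneq xNas => ->; exact: mem_last.
Qed.

Lemma is_cycle_rev (T : finType) (e : rel T) (s : seq T) :
  symmetric e -> is_cycle e s -> is_cycle e (rev s).
Proof.
move=> sym [us ss cs]; split; rewrite ?rev_uniq ?size_rev //.
by rewrite rev_cycle (eq_in_cycle (P := predT) (e' := e)) ?all_predT.
Qed.

Lemma cedge_orient (T : finType) (e : rel T) (C : seq T) (x y : T) :
  symmetric e -> is_cycle e C -> x != y -> [set x; y] \in cedges C ->
  exists C', [/\ is_cycle e C', perm_eq C' C & next C' x = y].
Proof.
move=> sym cycC xNy /imsetP [z _ xy_eq].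
have [uC _ _] := cycC.
have xzC : x \in [set z; next C z] by rewrite -xy_eq set21.
have yzC : y \in [set z; next C z] by rewrite -xy_eq set22.
case/set2P: xzC => [xz | xnz]; case/set2P: yzC => [yz | ynz].
- by rewrite xz yz eqxx in xNy.
- by exists C; rewrite perm_refl xz ynz.
- exists (rev C); split; [exact: is_cycle_rev | by rewrite perm_rev |].
  by rewrite next_rev // xnz yz prev_next.
- by rewrite xnz ynz eqxx in xNy.
Qed.

Lemma cycle_replace_edge (T : finType) (e : rel T) (C : seq T)
    (x y : T) (p : seq T) :
  is_cycle e C -> next C x = y -> x != y ->
  path e x p -> uniq (x :: p) -> last x p = y ->
  (forall z, z \in p -> z != y -> z \notin C) ->
  exists2 D, is_cycle e D & size D = (size C).-1 + size p.
Proof.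
move=> [uC szC cC] nextCx xNy pathp up lastp pNC.
have xC : x \in C.
  by apply: contraTT xNy => xNC; rewrite negbK -nextCx next_nth (negbTE xNC).
case/rot_to: xC => i t rotC.
have ut : uniq (x :: t) by rewrite -rotC rot_uniq.
have ct : cycle e (x :: t) by rewrite -rotC rot_cycle.
have nextt : next (x :: t) x = y by rewrite -rotC next_rot.
have szt : size C = (size t).+1 by rewrite -(size_rot i) rotC.
case: t => [|y' q] in rotC ut ct nextt szt.
  by rewrite /= eqxx in nextt; rewrite nextt eqxx in xNy.
rewrite /= eqxx in nextt; subst y'.
move: ut; rewrite /= !inE negb_or => /andP [/andP [_ xNq] /andP [yNq uq]].
exists (x :: p ++ q); last by rewrite szt /= size_cat; lia.
split.
- rewrite -cat_cons cat_uniq up uq andbT /=.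
  apply/hasPn => z zq /=; rewrite inE negb_or.
  apply/andP; split; first by apply: contraNneq xNq => <-.
  have zC : z \in C by rewrite -(mem_rot i) rotC !inE zq !orbT.
  apply: contraL zC => zp; apply: pNC zp _.
  by apply: contraNneq yNq => <-.
- have szp : 0 < size p.
    rewrite lt0n; apply: contraNneq xNy => /size0nil p0.
    by rewrite -lastp p0.
  by move: szC; rewrite szt /= size_cat; lia.
- rewrite /= rcons_cat cat_path pathp lastp.
  by move: ct => /= /andP [_ ->].
Qed.

Theorem mainTheorem6 (T : finType) (e : rel T) (C : seq T) (x y : T)
    (p : seq T) :
  simple_graph e -> in_Gstar e -> two_connected e ->
  longest_odd_cycle e C -> 5 <= size C ->
  [set x; y] \in cedges C ->
  external_path e C x y p ->
  p != [:: y] ->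
  ~~ odd (size p).
Proof.
move=> [sym _] _ _ [[cycC oddC] longest] _ xyC
  [[_ _ pathp up] [lastp szp pNC]] pNy.
apply/negP => oddp.
have xNy : x != y by rewrite -lastp uniq_path_ends_neq.
have [C' [cycC' permC' nextC'x]] := cedge_orient sym cycC xNy xyC.
have pNC' z : z \in p -> z != y -> z \notin C'.
  by rewrite (perm_mem permC'); exact: pNC.
have [D cycD szD] := cycle_replace_edge cycC' nextC'x xNy pathp up lastp pNC'.
have szp3 : 3 <= size p.
  case: p pNy lastp oddp {pathp up pNC pNC' szD szp} => [|a [|b [|c s]]] //=.
  by move=> aNy ay; rewrite ay eqxx in aNy.
have oddD : odd (size D).
  rewrite szD (perm_size permC') oddD oddp addbT.
  by case: (size C) oddC.
have := longest D (conj cycD oddD).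
by rewrite szD (perm_size permC'); move: (size C) (size p) szp3 => c n; lia.
Qed.
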